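(* Let $\{X_t\}_{t\in\mathbb N^+}$ be a real-valued process adapted to a filtration $\{\mathcal F_t\}_{t\in\mathbb N}$ with $\mathcal F_0$ trivial, such that for all $t\in\mathbb N^+$, $\mathbb E[X_t\mid\mathcal F_{t-1}]=\mu$ (an unknown constant) and $\mathbb E[(X_t-\mu)^2\mid\mathcal F_{t-1}]\le\sigma^2$ ($\sigma^2$ known). Let $\alpha\in(0,1)$ and let $\{\lambda_t\}_{t\in\mathbb N^+}$ be any predictable process. Writing each $\sum$ for $\sum_{i=1}^t$, define $$U_t^+=\frac{\sum\lambda_i^2X_i}{3}-\sum\lambda_i,\qquad U_t^-=\frac{\sum\lambda_i^2X_i}{3}+\sum\lambda_i,$$ $$\mathrm{aCI}^{\mathsf{SN}+}_t=\left(\frac{U_t^+-\sqrt{D_t^+}}{\sum\lambda_i^2/3},\ \frac{U_t^++\sqrt{D_t^+}}{\sum\lambda_i^2/3}\right),\quad D_t^+=(U_t^+)^2-\frac{2\sum\lambda_i^2}{3}\left(\log(2/\alpha)-\sum\lambda_iX_i+\frac{\sum\lambda_i^2X_i^2+2\sigma^2\sum\lambda_i^2}{6}\right),$$ $$\mathrm{aCI}^{\mathsf{SN}-}_t=\left(\frac{U_t^--\sqrt{D_t^-}}{\sum\lambda_i^2/3},\ \frac{U_t^-+\sqrt{D_t^-}}{\sum\lambda_i^2/3}\right),\quad D_t^-=(U_t^-)^2-\frac{2\sum\lambda_i^2}{3}\left(\log(2/\alpha)+\sum\lambda_iX_i+\frac{\sum\lambda_i^2X_i^2+2\sigma^2\sum\lambda_i^2}{6}\right),$$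 with the convention that an interval is empty when the quantity under its square root is negative. Then $$\Pr\left[\forall t\in\mathbb N^+,\ \mu\notin\mathrm{aCI}^{\mathsf{SN}+}_t\right]\ge1-\alpha/2\quad\text{and}\quad\Pr\left[\forall t\in\mathbb N^+,\ \mu\notin\mathrm{aCI}^{\mathsf{SN}-}_t\right]\ge1-\alpha/2.$$
   Context: A process $\{\lambda_t\}$ is predictable if each $\lambda_t$ is $\mathcal F_{t-1}$-measurable. *)

From HB Require Import structures.
From mathcomp Require Import all_boot all_order all_algebra.
From mathcomp Require Import all_classical all_reals all_analysis.
Set Implicit Arguments. Unset Strict Implicit. Unset Printing Implicit Defensive.
Import Order.TTheory GRing.Theory Num.Theory.
Import numFieldNormedType.Exports.
Local Open Scope classical_set_scope.
Local Open Scope ring_scope.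

Section Defs.
Context {d : measure_display} {T : measurableType d} {R : realType}.

Definition Gmeasurable (G : set (set T)) (f : T -> R) : Prop :=
  forall B : set R, measurable B -> G (f @^-1` B).

Definition filtration (F : nat -> set (set T)) : Prop :=
  (forall n, sigma_algebra setT (F n)) /\
  (forall n, F n `<=` measurable) /\
  (forall n m, (n <= m)%N -> F n `<=` F m).

Definition is_cond_exp (P : probability T R) (G : set (set T)) (X Y : T -> R) : Prop :=
  Gmeasurable G Y /\
  P.-integrable setT (EFin \o X) /\
  P.-integrable setT (EFin \o Y) /\
  (forall A, G A -> (\int[P]_(x in A) (X x)%:E = \int[P]_(x in A) (Y x)%:E)%E).

Definition S (f : nat -> R) (t : nat) : R := \sum_(1 <= i < t.+1) f i.

Section CI.
Variables (lam X : nat -> T -> R) (alpha sigma : R).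

Definition Slam t w := S (fun i => lam i w) t.
Definition Slam2 t w := S (fun i => lam i w ^+ 2) t.
Definition SlamX t w := S (fun i => lam i w * X i w) t.
Definition Slam2X t w := S (fun i => lam i w ^+ 2 * X i w) t.
Definition Slam2X2 t w := S (fun i => lam i w ^+ 2 * X i w ^+ 2) t.

Definition Uplus t w := Slam2X t w / 3 - Slam t w.
Definition Uminus t w := Slam2X t w / 3 + Slam t w.

Definition Dplus t w := Uplus t w ^+ 2 - (2 * Slam2 t w / 3) *
  (ln (2 / alpha) - SlamX t w + (Slam2X2 t w + 2 * sigma ^+ 2 * Slam2 t w) / 6).
Definition Dminus t w := Uminus t w ^+ 2 - (2 * Slam2 t w / 3) *
  (ln (2 / alpha) + SlamX t w + (Slam2X2 t w + 2 * sigma ^+ 2 * Slam2 t w) / 6).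

Definition aCI (U D : R) (s2 : R) : set R :=
  if D < 0 then set0
  else [set x | (U - Num.sqrt D) / (s2 / 3) < x < (U + Num.sqrt D) / (s2 / 3)].

Definition aCIplus t w := aCI (Uplus t w) (Dplus t w) (Slam2 t w).
Definition aCIminus t w := aCI (Uminus t w) (Dminus t w) (Slam2 t w).
End CI.
End Defs.

From HB Require Import structures.
From mathcomp Require Import all_boot all_order all_algebra.
From mathcomp Require Import all_classical all_reals all_analysis.
From mathcomp Require Import measurable_realfun.
From mathcomp Require Import ring lra.
Import Order.TTheory GRing.Theory Num.Theory.
Import numFieldNormedType.Exports.
Local Open Scope classical_set_scope.
Local Open Scope ring_scope.

(* With Z_i = lam_i (X_i - mu) - (lam_i (X_i - mu))^2 / 6 - lam_i^2 sigma^2 / 3,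
   the process M_t = exp (Z_1 + ... + Z_t) is a nonnegative supermartingale
   with M_0 = 1: since exp (y - y^2 / 6) <= 1 + y + y^2 / 3, the conditional
   mean and variance hypotheses give, with the F_t-measurable weight
   W = exp (- lam_{t+1}^2 sigma^2 / 3),
   E[exp Z_{t+1} | F_t] <= W (1 + lam_{t+1}^2 sigma^2 / 3) <= 1.
   Ville's inequality, proved with M stopped when it first exceeds 2 / alpha,
   gives P(forall t, M_t <= 2 / alpha) >= 1 - alpha / 2, and completing the
   square shows that mu lies in aCI^SN+_t exactly when log M_t > log (2 / alpha).
   The bound for aCI^SN- is the same statement for the predictable process -lam.
   Conditional expectations enter only through E[phi X] = E[phi E[X | F_t]] for
   bounded F_t-measurable phi, obtained by approximating phi with F_t-measurable
   step functions. *)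

Section RealInequalities.
Context {R : realType}.

Definition quad_exp_ratio (y : R) := (1 + y + y ^+ 2 / 3) * expR (- y + y ^+ 2 / 6).

Lemma is_derive_quad_exp_ratio (x : R) :
  is_derive x 1 quad_exp_ratio (expR (- x + x ^+ 2 / 6) * (x ^+ 3 / 9)).
Proof.
have dlin : is_derive x 1 (fun y : R => - y + y ^+ 2 / 6) (-1 + x / 3).
  by apply: is_derive_eq; rewrite !scaler0 add0r /GRing.scale /=; field.
have dquad : is_derive x 1 (fun y : R => 1 + y + y ^+ 2 / 3) (1 + 2 * x / 3).
  by apply: is_derive_eq; rewrite !scaler0 !add0r /GRing.scale /=; field.
have := is_deriveM dquad (is_derive1_comp (is_derive_expR _) dlin).
rewrite (_ : _ * _ = quad_exp_ratio); last exact/funext.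
by move/is_derive_eq; apply; rewrite /GRing.scale /=; field.
Qed.

Lemma quad_exp_ratio_ge1 (y : R) : 1 <= quad_exp_ratio y.
Proof.
have der1 z : derive1 quad_exp_ratio z = expR (- z + z ^+ 2 / 6) * (z ^+ 3 / 9).
  by rewrite derive1E; apply: derive_val; exact: is_derive_quad_exp_ratio.
have dv (z : R) : derivable quad_exp_ratio z 1 by case: (is_derive_quad_exp_ratio z).
have ct (a b : R) : {within `[a, b], continuous quad_exp_ratio}.
  apply: continuous_subspaceT => z.
  exact/differentiable_continuous/derivable1_diffP.
have -> : 1 = quad_exp_ratio 0.
  by rewrite /quad_exp_ratio expr0n /= oppr0 !mul0r !addr0 expR0 mulr1.
have [y0|y0] := leP 0 y.
  have d0 z : z \in `]0, y[ -> 0 <= derive1 quad_exp_ratio z.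
    rewrite in_itv /= der1 => /andP[z0 _].
    by rewrite mulr_ge0 ?expR_ge0 // divr_ge0 // exprn_ge0 // ltW.
  by apply: (ger0_derive1_le_cc (fun z _ => dv z) d0 (ct 0 y));
    rewrite ?in_itv /= ?lexx ?y0.
have d0 z : z \in `]y, 0[ -> derive1 quad_exp_ratio z <= 0.
  rewrite in_itv /= der1 => /andP[_ z0].
  rewrite pmulr_rle0 ?expR_gt0 // pmulr_lle0 // exprSr.
  exact: mulr_ge0_le0 (sqr_ge0 z) (ltW z0).
by apply: (ler0_derive1_le_cc (fun z _ => dv z) d0 (ct y 0));
  rewrite ?in_itv /= ?lexx ?(ltW y0).
Qed.

Lemma expR_le_quad (y : R) : expR (y - y ^+ 2 / 6) <= 1 + y + y ^+ 2 / 3.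
Proof.
have e : expR (y - y ^+ 2 / 6) * expR (- y + y ^+ 2 / 6) = 1.
  by rewrite -expRD (_ : _ + _ = 0) ?expR0 //; ring.
rewrite -(ler_pM2r (expR_gt0 (- y + y ^+ 2 / 6))) e.
exact: quad_exp_ratio_ge1.
Qed.

Definition gauss_weight (s l : R) := expR (- (l ^+ 2 * s / 3)).

Lemma gauss_weight_mul1D_le1 (s l : R) :
  gauss_weight s l * (1 + l ^+ 2 * s / 3) <= 1.
Proof.
rewrite /gauss_weight -[leRHS](expR0) -(subrr (l ^+ 2 * s / 3)) expRD mulrC.
by rewrite ler_wpM2r ?expR_ge0 // expR_ge1Dx.
Qed.

Lemma gauss_weight_bounds (l : R) [s h B : R] : 0 < s -> 0 <= h <= B ->
  [/\ `|h * gauss_weight s l| <= B, `|h * (gauss_weight s l * l)| <= B * (1 + 3 / s)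
    & 0 <= h * (gauss_weight s l * (l ^+ 2 / 3)) <= B / s].
Proof.
move=> s0 /andP[h0 hB]; set E := gauss_weight s l; set u := l ^+ 2 * s / 3.
have E0 : 0 <= E := expR_ge0 _.
have u0 : 0 <= u by rewrite /u divr_ge0 // mulr_ge0 ?sqr_ge0 ?ltW.
have Eu1 : E * (1 + u) <= 1 := gauss_weight_mul1D_le1 s l.
have E1 : E <= 1 by apply: le_trans Eu1; rewrite ler_peMr // lerDl.
have Ew2 : E * (l ^+ 2 / 3) <= 1 / s.
  rewrite (_ : E * _ = E * u / s); last by rewrite /u; field; rewrite gt_eqF.
  by rewrite ler_pM2r ?invr_gt0 //; apply: le_trans Eu1; rewrite ler_wpM2l // lerDr.
have El : `|E * l| <= 1 + 3 / s.
  have l1 : `|l| <= 1 + l ^+ 2.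
    by rewrite -real_normK ?num_real //; have := sqr_ge0 (`|l| - 1); nra.
  rewrite normrM (ger0_norm E0); apply: le_trans (ler_wpM2l E0 l1) _.
  rewrite (_ : E * _ = E + 3 * (E * (l ^+ 2 / 3))); last by field.
  by rewrite lerD // (_ : 3 / s = 3 * (1 / s)) ?ler_pM2l // mul1r.
split.
- by rewrite normrM (ger0_norm h0) (ger0_norm E0) -[B]mulr1 ler_pM.
- by rewrite normrM (ger0_norm h0) ler_pM.
have w0 : 0 <= E * (l ^+ 2 / 3) by rewrite mulr_ge0 // divr_ge0 // sqr_ge0.
rewrite mulr_ge0 //=.
by apply: le_trans (ler_wpM2l h0 Ew2) _; rewrite mul1r ler_pM2r ?invr_gt0.
Qed.

(* The sum counts the positive multiples of [dl] up to [p]; the first conjunct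
   is the invariant that carries the induction. *)
Lemma stair_sum_bounds [dl p : R] (N : nat) : 0 < dl -> 0 <= p ->
  (N%:R * dl <= p -> \sum_(j < N) (j.+1%:R * dl <= p)%R%:R = N%:R :> R) /\
  (p < N%:R * dl -> p - dl < dl * \sum_(j < N) (j.+1%:R * dl <= p)%R%:R <= p).
Proof.
move=> dl0 p0; elim: N => [|N [IHle IHgt]].
  by rewrite big_ord0 mul0r; split=> // ?; lra.
rewrite big_ord_recr /=.
have [pN|pN] := leP (N.+1%:R * dl) p.
  have pN' : N%:R * dl <= p by apply: le_trans pN; rewrite ler_pM2r // ler_nat.
  by rewrite IHle // natr1; split=> // ?; lra.
rewrite addr0 -natr1 in pN *; split=> [?|_]; first lra.
have [pN'|pN'] := leP (N%:R * dl) p; last exact: IHgt.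
by rewrite IHle //; apply/andP; split; nra.
Qed.

Lemma normr_le_mul_eps_eq0 (x C : R) : 0 <= C ->
  (forall e, 0 < e -> `|x| <= e * C) -> x = 0.
Proof.
move=> C0 hx; apply/normr0_eq0/eqP; rewrite eq_le normr_ge0 andbT.
apply/ler_addgt0Pr => e e0; rewrite add0r.
apply: le_trans (hx (e / (C + 1)) _) _; first by rewrite divr_gt0 // ltr_wpDl.
by rewrite mulrAC ler_pdivrMr ?ltr_wpDl //; nra.
Qed.

End RealInequalities.

Lemma measurable_fun_expR {d : measure_display} {T : measurableType d} {R : realType}
    (D : set T) (f : T -> R) :
  measurable_fun D f -> measurable_fun D (fun x => expR (f x)).
Proof. by move=> mf; exact: measurableT_comp. Qed.

Ltac measurable_fun_tac := repeat first [ assumption | exact: measurable_cst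
  | apply: measurable_funB | apply: measurable_funD | apply: measurable_funM
  | apply: measurable_funX | apply: measurable_fun_expR | apply: measurable_funN ].

Section BoundedIntegrands.
Context {d : measure_display} {T : measurableType d} {R : realType}.
Context {P : probability T R}.
Local Notation integrable f := (P.-integrable setT (EFin \o f)).

Lemma indic_ge0 (A : set T) x : 0 <= (\1_A x : R).
Proof. by rewrite indicE ler0n. Qed.

Lemma indic_le1 (A : set T) x : (\1_A x : R) <= 1.
Proof. by rewrite indicE lern1 leq_b1. Qed.

Lemma indic_eq1 [A : set T] [x : T] : A x -> (\1_A x : R) = 1.
Proof. by move=> Ax; rewrite indicE mem_set. Qed.

Lemma indic_eq0 [A : set T] [x : T] : ~ A x -> (\1_A x : R) = 0.
Proof. by move=> Ax; rewrite indicE memNset. Qed.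

Lemma normr_indic_le1 (A : set T) x : `|(\1_A x : R)| <= 1.
Proof. by rewrite ger0_norm ?indic_ge0 ?indic_le1. Qed.

Lemma normr_sum_indic_le (A : nat -> set T) N x :
  `|\sum_(j < N) (\1_(A j) x : R)| <= N%:R.
Proof.
rewrite ger0_norm; last by apply: sumr_ge0 => j _; exact: indic_ge0.
by rewrite -[N in N%:R]card_ord -sumr_const ler_sum // => j _; exact: indic_le1.
Qed.

Lemma bounded_normr_le (h : T -> R) B :
  (forall x, `|h x| <= B) -> [bounded h x | x in setT].
Proof.
move=> hB; exists B; split => [|M BM t _]; first exact: num_real.
exact: le_trans (hB t) (ltW BM).
Qed.

Lemma bounded_integrable (h : T -> R) B :
  measurable_fun setT h -> (forall x, `|h x| <= B) -> integrable h.
Proof.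
move=> mh /bounded_normr_le hB; apply: measurable_bounded_integrable => //.
by rewrite (le_lt_trans (probability_le1 P measurableT)) ?ltry.
Qed.

Lemma integrable_bounded_mul [h f : T -> R] [B : R] :
  measurable_fun setT h -> (forall x, `|h x| <= B) ->
  integrable f -> integrable (fun x => h x * f x).
Proof.
move=> mh /bounded_normr_le hB fi.
apply: eq_integrable (integrableMl measurableT fi mh hB) => // x _ /=.
by rewrite -EFinM mulrC.
Qed.

Lemma integrable_cst_mul (k : R) [h : T -> R] :
  integrable h -> integrable (fun x => k * h x).
Proof.
by apply: (@integrable_bounded_mul (fun=> k) _ `|k|) => //; exact: measurable_cst.
Qed.

Lemma integrable_add [h k : T -> R] :
  integrable h -> integrable k -> integrable (fun x => h x + k x).
Proof. by move=> hi ki; exact: eq_integrable (integrableD _ hi ki). Qed.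

Lemma integrable_sub [h k : T -> R] :
  integrable h -> integrable k -> integrable (fun x => h x - k x).
Proof. by move=> hi ki; exact: eq_integrable (integrableB _ hi ki). Qed.

Lemma ae_eq_Rintegral [f g : T -> R] :
  measurable_fun setT f -> measurable_fun setT g ->
  {ae P, forall x, f x = g x} -> \int[P]_x f x = \int[P]_x g x.
Proof.
move=> mf mg fg; congr fine.
apply: ae_eq_integral => //; try exact/measurable_EFinP.
by apply: filterS fg => x fgx _ /=; rewrite fgx.
Qed.

Lemma ae_le_Rintegral [f g : T -> R] : integrable f -> integrable g ->
  {ae P, forall x, f x <= g x} -> \int[P]_x f x <= \int[P]_x g x.
Proof.
move=> fi gi fg; rewrite -subr_ge0 -RintegralB //.
have mf : measurable_fun setT f by exact/measurable_EFinP/(measurable_int _ fi).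
have mg : measurable_fun setT g by exact/measurable_EFinP/(measurable_int _ gi).
rewrite (@ae_eq_Rintegral _ (fun x => Num.max (g x - f x) 0)).
- by apply: Rintegral_ge0 => x _; rewrite le_max lexx orbT.
- exact: measurable_funB.
- exact: measurable_maxr (measurable_funB mg mf) (measurable_cst _).
- by apply: filterS fg => x fgx; rewrite max_l // subr_ge0.
Qed.

Lemma Rintegral_mul_dist_le (psi phi h : T -> R) B dl :
  measurable_fun setT psi -> measurable_fun setT phi ->
  (forall x, `|psi x| <= B) -> (forall x, `|psi x - phi x| <= dl) -> integrable h ->
  `|\int[P]_x (psi x * h x) - \int[P]_x (phi x * h x)| <= dl * \int[P]_x `|h x|.
Proof.
move=> mpsi mphi psiB dpsi hi.
have phiB x : `|phi x| <= B + dl.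
  have -> : phi x = psi x - (psi x - phi x) by ring.
  by apply: le_trans (ler_normB _ _) _; rewrite lerD.
have psihi := integrable_bounded_mul mpsi psiB hi.
have phihi := integrable_bounded_mul mphi phiB hi.
have nhi : integrable (fun x => `|h x|) by exact: integrable_norm.
rewrite -RintegralB // -RintegralZl //.
apply: le_trans (le_normr_Rintegral measurableT (integrable_sub psihi phihi)) _.
apply: le_Rintegral => //; first exact/integrable_norm/integrable_sub.
  exact: integrable_cst_mul.
by move=> x _; rewrite -mulrBl normrM ler_wpM2r.
Qed.

Lemma integrable_sum_indic_mul (A : nat -> set T) N [h : T -> R] :
  (forall j, measurable (A j)) -> integrable h ->
  integrable (fun x => (\sum_(j < N) \1_(A j) x) * h x).
Proof.
move=> mA; apply: integrable_bounded_mul (normr_sum_indic_le A N).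
by apply: measurable_sum => j; exact: measurable_indic.
Qed.

End BoundedIntegrands.

Section SubSigmaAlgebra.
Context {d : measure_display} {T : measurableType d} {R : realType}.

(* [Gmeasurable] phrased as measurability for the sigma-algebra generated by
   [G], so that the closure lemmas about [measurable_fun] apply *)
Definition Gmeasurable_fun (G : set (set T)) (f : T -> R) :=
  measurable_fun [set: g_sigma_algebraType G] (f : g_sigma_algebraType G -> R).

Lemma Gmeasurable_fun_subset [G H : set (set T)] [f : T -> R] :
  G `<=` H -> Gmeasurable_fun G f -> Gmeasurable_fun H f.
Proof.
move=> GH mf _ B mB; rewrite setTI; apply: sub_sigma_algebra2 GH _ _.
by have := mf measurableT B mB; rewrite setTI.
Qed.

Context {G : set (set T)}.
Hypothesis G_sigma : sigma_algebra setT G.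
Hypothesis G_sub : G `<=` measurable.

Lemma G_setT : G setT.
Proof.
by rewrite -(sigma_algebra_id G_sigma); exact: (@measurableT _ (g_sigma_algebraType G)).
Qed.

Lemma G_setI A B : G A -> G B -> G (A `&` B).
Proof.
rewrite -(sigma_algebra_id G_sigma) => GA GB.
exact: (@measurableI _ (g_sigma_algebraType G)).
Qed.

Lemma GmeasurableP (f : T -> R) : Gmeasurable G f <-> Gmeasurable_fun G f.
Proof.
rewrite /Gmeasurable_fun /Gmeasurable -{1}(sigma_algebra_id G_sigma).
by split=> [mf _ B /mf|mf B /(mf measurableT)]; rewrite setTI.
Qed.

Lemma Gmeasurable_fun_preimage [f : T -> R] B :
  Gmeasurable_fun G f -> measurable B -> G (f @^-1` B).
Proof. by move/GmeasurableP; apply. Qed.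

Lemma Gmeasurable_fun_measurable [f : T -> R] :
  Gmeasurable_fun G f -> measurable_fun setT f.
Proof.
by move=> mf _ B mB; rewrite setTI; exact/G_sub/Gmeasurable_fun_preimage.
Qed.

Lemma Gmeasurable_fun_indic A : G A -> Gmeasurable_fun G (\1_A).
Proof. by move=> GA; apply: measurable_indic; exact: sub_sigma_algebra. Qed.

Section ConditionalExpectation.
Context {P : probability T R}.
Local Notation integrable f := (P.-integrable setT (EFin \o f)).
Context {f g : T -> R}.
Hypotheses (fi : integrable f) (gi : integrable g).
Hypothesis fg : forall A, G A ->
  (\int[P]_(x in A) (f x)%:E = \int[P]_(x in A) (g x)%:E)%E.

Lemma Rintegral_indic_mul_eq A : G A ->
  \int[P]_x (\1_A x * f x) = \int[P]_x (\1_A x * g x).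
Proof.
have indicM (k : T -> R) : \int[P]_x (\1_A x * k x) = \int[P]_(x in A) k x.
  rewrite [RHS]Rintegral_mkcond; apply: eq_Rintegral => x _.
  by rewrite /patch indicE; case: (x \in A); rewrite ?mul1r ?mul0r.
by move=> GA; rewrite !indicM /Rintegral fg.
Qed.

Lemma Rintegral_sum_indic_mul_eq (A : nat -> set T) N : (forall j, G (A j)) ->
  \int[P]_x ((\sum_(j < N) \1_(A j) x) * f x) =
  \int[P]_x ((\sum_(j < N) \1_(A j) x) * g x).
Proof.
move=> GA; have mA j := G_sub _ (GA j).
elim: N => [|N IH].
  under (eq_Rintegral P) => x _ do rewrite big_ord0 mul0r.
  by under [RHS](eq_Rintegral P) => x _ do rewrite big_ord0 mul0r.
have indic_mul j (h : T -> R) : integrable h -> integrable (fun x => \1_(A j) x * h x).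
  exact/integrable_bounded_mul/normr_indic_le1/measurable_indic.
under (eq_Rintegral P) => x _ do rewrite big_ord_recr mulrDl.
under [RHS](eq_Rintegral P) => x _ do rewrite big_ord_recr mulrDl.
by rewrite !RintegralD ?IH ?Rintegral_indic_mul_eq ?integrable_sum_indic_mul ?indic_mul.
Qed.

Lemma Rintegral_nonneg_bounded_mul_eq (psi : T -> R) B :
  Gmeasurable_fun G psi -> (forall x, 0 <= psi x <= B) ->
  \int[P]_x (psi x * f x) = \int[P]_x (psi x * g x).
Proof.
move=> mpsi psiB; have mpsiT := Gmeasurable_fun_measurable mpsi.
have psi_norm x : `|psi x| <= B by have /andP[p0 pB] := psiB x; rewrite ger0_norm.
apply/eqP; rewrite -subr_eq0; apply/eqP.
apply: (@normr_le_mul_eps_eq0 _ _ (\int[P]_x `|f x| + \int[P]_x `|g x|)).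
  by rewrite addr_ge0 // Rintegral_ge0.
move=> dl dl0.
pose A j := [set y | j.+1%:R * dl <= psi y].
have GA j : G (A j).
  have -> : A j = psi @^-1` `[j.+1%:R * dl, +oo[.
    by apply/seteqP; split=> y; rewrite /A /preimage /= in_itv /= andbT.
  exact: Gmeasurable_fun_preimage.
pose N := (Num.truncn (B / dl)).+1.
(* a [G]-measurable step function within [dl] of [psi] *)
pose phi x := dl * \sum_(j < N) \1_(A j) x.
have mphi : measurable_fun setT phi.
  apply: measurable_funM => //; apply: measurable_sum => j.
  exact/measurable_indic/G_sub.
have dpsi x : `|psi x - phi x| <= dl.
  have /andP[p0 pB] := psiB x.
  have psiN : psi x < N%:R * dl.
    rewrite -ltr_pdivrMr //; apply: le_lt_trans (truncnS_gt _).
    by rewrite ler_pM2r ?invr_gt0.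
  have [_ /(_ psiN) /andP[lo hi]] := stair_sum_bounds N dl0 p0.
  have -> : phi x = dl * \sum_(j < N) (j.+1%:R * dl <= psi x)%R%:R.
    by congr (_ * _); apply: eq_bigr => j _; rewrite indicE mem_setE.
  by rewrite ger0_norm; lra.
have phi_eq : \int[P]_x (phi x * f x) = \int[P]_x (phi x * g x).
  under eq_Rintegral => x _ do rewrite -mulrA.
  under [RHS]eq_Rintegral => x _ do rewrite -mulrA.
  have mA j : measurable (A j) := G_sub _ (GA j).
  by rewrite !RintegralZl ?Rintegral_sum_indic_mul_eq //; exact: integrable_sum_indic_mul.
have -> : \int[P]_x (psi x * f x) - \int[P]_x (psi x * g x) =
    (\int[P]_x (psi x * f x) - \int[P]_x (phi x * f x)) -
    (\int[P]_x (psi x * g x) - \int[P]_x (phi x * g x)) by rewrite phi_eq; ring.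
rewrite mulrDr; apply: le_trans (ler_normB _ _) _.
by apply: lerD; exact: Rintegral_mul_dist_le.
Qed.

Lemma Rintegral_bounded_mul_eq (psi : T -> R) B :
  Gmeasurable_fun G psi -> (forall x, `|psi x| <= B) ->
  \int[P]_x (psi x * f x) = \int[P]_x (psi x * g x).
Proof.
move=> mpsi psiB; have mpsiT := Gmeasurable_fun_measurable mpsi.
have shifted : \int[P]_x ((psi x + B) * f x) = \int[P]_x ((psi x + B) * g x).
  apply: (@Rintegral_nonneg_bounded_mul_eq _ (B + B)).
    exact: measurable_funD mpsi (measurable_cst _).
  by move=> x; have := psiB x; rewrite ler_norml => /andP[? ?]; apply/andP; split; lra.
have fg_total : \int[P]_x f x = \int[P]_x g x by rewrite /Rintegral fg //; exact: G_setT.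
move: shifted; under (eq_Rintegral P) => x _ do rewrite mulrDl.
under [in RHS](eq_Rintegral P) => x _ do rewrite mulrDl.
by rewrite !RintegralD ?RintegralZl ?fg_total ?integrable_cst_mul
  ?(integrable_bounded_mul mpsiT psiB) //; exact: addIr.
Qed.

End ConditionalExpectation.

End SubSigmaAlgebra.

Lemma S0 {R : realType} (f : nat -> R) : S f 0 = 0.
Proof. by rewrite /S big_geq. Qed.

Lemma SS {R : realType} (f : nat -> R) t : S f t.+1 = S f t + f t.+1.
Proof. by rewrite /S big_nat_recr. Qed.

Section LogIncrements.
Context {T : Type} {R : realType}.
Variables (X lam : nat -> T -> R) (mu s : R).

Definition Z t w := lam t w * (X t w - mu) - (lam t w * (X t w - mu)) ^+ 2 / 6
  - lam t w ^+ 2 * s / 3.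
Definition L t w := S (fun i => Z i w) t.
Definition M t w := expR (L t w).

Lemma Z_le t w : 0 <= s -> Z t w <= 3 / 2.
Proof.
move=> s0; rewrite /Z; set y := lam t w * (X t w - mu).
have := sqr_ge0 (y - 3); have : 0 <= lam t w ^+ 2 * s by rewrite mulr_ge0 ?sqr_ge0.
lra.
Qed.

Lemma expR_Z_le t w : expR (Z t w) <= gauss_weight s (lam t w) *
  (1 + lam t w * (X t w - mu) + (lam t w * (X t w - mu)) ^+ 2 / 3).
Proof.
rewrite /Z expRD mulrC ler_wpM2l ?expR_ge0 //; exact: expR_le_quad.
Qed.

Lemma L0 w : L 0 w = 0. Proof. exact: S0. Qed.
Lemma LS t w : L t.+1 w = L t w + Z t.+1 w. Proof. exact: SS. Qed.
Lemma M0 w : M 0 w = 1. Proof. by rewrite /M L0 expR0. Qed.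
Lemma MS t w : M t.+1 w = M t w * expR (Z t.+1 w).
Proof. by rewrite /M LS expRD. Qed.

Lemma M_le t w : 0 <= s -> M t w <= expR (t%:R * (3 / 2)).
Proof.
move=> s0; rewrite ler_expR; elim: t => [|t IH]; first by rewrite L0 mul0r.
by rewrite LS -natr1 mulrDl mul1r lerD // Z_le.
Qed.

End LogIncrements.

Section ConfidenceSets.
Context {d : measure_display} {T : measurableType d} {R : realType}.
Variables (lam X : nat -> T -> R) (alpha sigma : R).

Lemma L_expand mu t w : L X lam mu (sigma ^+ 2) t w =
  SlamX lam X t w - mu * Slam lam t w
  - (Slam2X2 lam X t w - 2 * mu * Slam2X lam X t w + mu ^+ 2 * Slam2 lam t w
     + 2 * sigma ^+ 2 * Slam2 lam t w) / 6.
Proof.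
rewrite /SlamX /Slam /Slam2X2 /Slam2X /Slam2.
elim: t => [|t IH]; first by rewrite L0 !S0; ring.
by rewrite LS !SS IH /Z; field.
Qed.

Lemma Slam2_ge0 t w : 0 <= Slam2 lam t w.
Proof. by apply: sumr_ge0 => i _; exact: sqr_ge0. Qed.

Lemma L_eq0 mu s t w : Slam2 lam t w = 0 -> L X lam mu s t w = 0.
Proof.
elim: t => [|t IH]; first by rewrite L0.
rewrite /Slam2 SS -/(Slam2 lam t w) => /eqP.
rewrite paddr_eq0 ?Slam2_ge0 ?sqr_ge0 // sqrf_eq0 => /andP[/eqP/IH L0t /eqP l0].
by rewrite LS L0t /Z l0; ring.
Qed.

Lemma aCI_iff (U D s2 x : R) : 0 < s2 ->
  aCI U D s2 x <-> (s2 / 3 * x - U) ^+ 2 < D.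
Proof.
move=> s0; have a0 : 0 < s2 / 3 by rewrite divr_gt0.
rewrite /aCI; case: ifP => hD.
  by split => // h; have := sqr_ge0 (s2 / 3 * x - U); lra.
have D0 : 0 <= D by rewrite leNgt hD.
have r0 := sqrtr_ge0 D; have r2 := sqr_sqrtr D0.
set r := Num.sqrt D in r0 r2 *.
rewrite /= ltr_pdivrMr // ltr_pdivlMr // -r2.
by split => [/andP[? ?]|h]; [nra | apply/andP; split; nra].
Qed.

Lemma aCIplus_iff mu t w : 0 < alpha < 1 ->
  aCIplus lam X alpha sigma t w mu <-> ln (2 / alpha) < L X lam mu (sigma ^+ 2) t w.
Proof.
move=> /andP[a0 a1].
have ln0 : 0 < ln (2 / alpha) by apply: ln_gt0; rewrite ltr_pdivlMr // mul1r; lra.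
have [s0|s0] := eqVneq (Slam2 lam t w) 0.
  rewrite L_eq0 // /aCIplus /aCI s0 mul0r invr0 !mulr0.
  by case: ifP => _; split => //=; lra.
have {}s0 : 0 < Slam2 lam t w by rewrite lt_neqAle eq_sym s0 Slam2_ge0.
rewrite /aCIplus aCI_iff // -subr_gt0 -[in X in _ <-> X]subr_gt0.
have -> : Dplus lam X alpha sigma t w - (Slam2 lam t w / 3 * mu - Uplus lam X t w) ^+ 2
   = 2 * (Slam2 lam t w / 3) * (L X lam mu (sigma ^+ 2) t w - ln (2 / alpha)).
  by rewrite L_expand /Dplus /Uplus; field.
by rewrite pmulr_rgt0 // mulr_gt0 // divr_gt0.
Qed.

Lemma not_aCIplus_iff mu t w : 0 < alpha < 1 ->
  ~ aCIplus lam X alpha sigma t w mu <-> M X lam mu (sigma ^+ 2) t w <= 2 / alpha.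
Proof.
move=> /[dup] a01 /andP[a0 _]; rewrite aCIplus_iff // -ltr_expR lnK ?posrE ?divr_gt0 //.
by rewrite leNgt; split => [/negP|/negP].
Qed.

Lemma aCIminus_opp t w :
  aCIminus lam X alpha sigma t w = aCIplus (fun i w => - lam i w) X alpha sigma t w.
Proof.
set nlam := fun i w => - lam i w.
have e1 : Slam nlam t w = - Slam lam t w by rewrite /Slam /S sumrN.
have e2 : SlamX nlam X t w = - SlamX lam X t w.
  by rewrite /SlamX /S -sumrN; apply: eq_bigr => i _; rewrite mulNr.
have e3 : Slam2 nlam t w = Slam2 lam t w by apply: eq_bigr => i _; rewrite sqrrN.
have e4 : Slam2X nlam X t w = Slam2X lam X t w.
  by apply: eq_bigr => i _; rewrite sqrrN.
have e5 : Slam2X2 nlam X t w = Slam2X2 lam X t w.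
  by apply: eq_bigr => i _; rewrite sqrrN.
by rewrite /aCIminus /aCIplus /Dplus /Dminus /Uplus /Uminus e1 e2 e3 e4 e5 !opprK.
Qed.

End ConfidenceSets.

Section TestSupermartingale.
Context {d : measure_display} {T : measurableType d} {R : realType}.
Context {P : probability T R} {F : nat -> set (set T)}.
Hypothesis F_filtration : filtration F.
Context {X lam : nat -> T -> R} {mu s : R}.
Hypothesis s_ge0 : 0 <= s.
Hypothesis X_adapted : forall t, (0 < t)%N -> Gmeasurable_fun (F t) (X t).
Hypothesis X_mean : forall t, (0 < t)%N -> is_cond_exp P (F t.-1) (X t) (fun _ => mu).
Hypothesis X_var : forall t, (0 < t)%N -> exists Y : T -> R,
  is_cond_exp P (F t.-1) (fun w => (X t w - mu) ^+ 2) Y /\ {ae P, forall w, Y w <= s}.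
Hypothesis lam_predictable : forall t, (0 < t)%N -> Gmeasurable_fun (F t.-1) (lam t).

Local Notation integrable f := (P.-integrable setT (EFin \o f)).
Local Notation Zs := (Z X lam mu s).
Local Notation Ms := (M X lam mu s).

Lemma F_sigma n : sigma_algebra setT (F n). Proof. by case: F_filtration. Qed.
Lemma F_sub n : F n `<=` measurable. Proof. by case: F_filtration => _ []. Qed.
Lemma F_mono [m n] : (m <= n)%N -> F m `<=` F n.
Proof. by case: F_filtration => _ [_]; apply. Qed.

Lemma Gmeasurable_fun_F_measurable [k] [f : T -> R] :
  Gmeasurable_fun (F k) f -> measurable_fun setT f.
Proof. exact: (Gmeasurable_fun_measurable (F_sigma k) (F_sub k) (f := f)). Qed.

Lemma Gmeasurable_fun_Z t : (0 < t)%N -> Gmeasurable_fun (F t) (Zs t).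
Proof.
move=> t0; have ml : Gmeasurable_fun (F t) (lam t).
  exact: Gmeasurable_fun_subset (F_mono (leq_pred t)) (lam_predictable _ t0).
have mX := X_adapted _ t0; rewrite /Z; measurable_fun_tac.
Qed.

Lemma Gmeasurable_fun_M t : Gmeasurable_fun (F t) (Ms t).
Proof.
apply: measurable_fun_expR; elim: t => [|t IH].
  rewrite (_ : L _ _ _ _ 0 = cst 0); first exact: measurable_cst.
  by apply/funext => w; exact: L0.
rewrite (_ : L _ _ _ _ t.+1 = fun w => L X lam mu s t w + Zs t.+1 w); last first.
  by apply/funext => w; exact: LS.
apply: measurable_funD; last exact: Gmeasurable_fun_Z.
exact: Gmeasurable_fun_subset (F_mono (leqnSn t)) IH.
Qed.

Lemma X_eq_mu_ae k : s = 0 -> {ae P, forall x, X k.+1 x = mu}.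
Proof.
move=> s0; have [Y [[_ [Vi [Yi VE]]] Yle]] := X_var _ (ltn0Sn k).
have mV : measurable_fun setT (fun x => (X k.+1 x - mu) ^+ 2).
  have mX := Gmeasurable_fun_F_measurable (X_adapted _ (ltn0Sn k)).
  measurable_fun_tac.
have V0 : \int[P]_x ((X k.+1 x - mu) ^+ 2) = 0.
  apply/eqP; rewrite eq_le Rintegral_ge0 ?andbT => [|x _]; last exact: sqr_ge0.
  rewrite {1}/Rintegral (VE _ (G_setT (F_sigma k))) -/(Rintegral _ _ _).
  have := ae_le_Rintegral Yi (finite_measure_integrable_cst P s measurableT) Yle.
  by rewrite Rintegral_cst // s0 mul0r.
have : ae_eq P setT (fun x => ((X k.+1 x - mu) ^+ 2)%:E) (cst 0%E).
  apply/(ae_eq_integral_abs _ measurableT); first exact/measurable_EFinP.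
  under eq_integral => x _ do rewrite gee0_abs ?lee_fin ?sqr_ge0 //.
  by rewrite -(fineK (integrable_fin_num measurableT Vi)) -/(Rintegral _ _ _) V0.
apply: filterS => x /(_ I) /= /eqP.
by rewrite eqe sqrf_eq0 subr_eq0 => /eqP.
Qed.

Lemma integrable_mul_expZ [k] [H : T -> R] [B : R] :
  Gmeasurable_fun (F k) H -> (forall x, `|H x| <= B) ->
  integrable (fun x => H x * expR (Zs k.+1 x)).
Proof.
move=> mH HB; have mHT := Gmeasurable_fun_F_measurable mH.
have mZ := Gmeasurable_fun_F_measurable (Gmeasurable_fun_Z _ (ltn0Sn k)).
apply: (bounded_integrable _ (B * expR (3 / 2))); first by measurable_fun_tac.
move=> x; rewrite normrM (ger0_norm (expR_ge0 _)) ler_pM ?normr_ge0 ?expR_ge0 //.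
by rewrite ler_expR Z_le.
Qed.

(* For [s = 0] the weights used in the general case are unbounded, but then
   [X k.+1 = mu] almost surely. *)
Lemma Rintegral_mul_expZ_var0 k (H : T -> R) : s = 0 -> Gmeasurable_fun (F k) H ->
  \int[P]_x (H x * expR (Zs k.+1 x)) = \int[P]_x H x.
Proof.
move=> s0 mH; have mHT := Gmeasurable_fun_F_measurable mH.
apply: ae_eq_Rintegral => //.
- have mX := Gmeasurable_fun_F_measurable (X_adapted _ (ltn0Sn k)).
  have ml := Gmeasurable_fun_F_measurable (lam_predictable _ (ltn0Sn k)).
  rewrite /Z; measurable_fun_tac.
apply: filterS (X_eq_mu_ae k s0) => x Xmu.
by rewrite /Z Xmu s0 subrr !mulr0 expr0n /= !mul0r !subr0 expR0 mulr1.
Qed.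

Lemma Rintegral_mul_X_eq [k] [phi : T -> R] [B : R] :
  Gmeasurable_fun (F k) phi -> (forall x, `|phi x| <= B) ->
  \int[P]_x (phi x * X k.+1 x) = \int[P]_x (phi x * mu).
Proof.
move=> mphi phiB; have [_ [Xi [mui XE]]] := X_mean _ (ltn0Sn k).
exact (Rintegral_bounded_mul_eq (F_sigma k) (F_sub k) Xi mui XE _ _ mphi phiB).
Qed.

Lemma Rintegral_mul_sqr_centered_le [k] [phi : T -> R] [B : R] :
  Gmeasurable_fun (F k) phi -> (forall x, 0 <= phi x <= B) ->
  \int[P]_x (phi x * (X k.+1 x - mu) ^+ 2) <= \int[P]_x (phi x * s).
Proof.
move=> mphi phiB; have [Y [[_ [Vi [Yi VE]]] Yle]] := X_var _ (ltn0Sn k).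
have phi0 x : 0 <= phi x by case/andP: (phiB x).
have phiB' x : `|phi x| <= B by rewrite ger0_norm ?phi0; case/andP: (phiB x).
have int_phi f : integrable f -> integrable (fun x => phi x * f x).
  exact: integrable_bounded_mul (Gmeasurable_fun_F_measurable mphi) phiB'.
rewrite (Rintegral_bounded_mul_eq (F_sigma k) (F_sub k) Vi Yi VE _ _ mphi phiB').
apply: ae_le_Rintegral (int_phi _ Yi) (int_phi (cst s) _) _.
  exact: finite_measure_integrable_cst.
by apply: filterS Yle => x; exact: ler_wpM2l.
Qed.

Lemma Rintegral_mul_expZ_le_pos k (H : T -> R) B : 0 < s ->
  Gmeasurable_fun (F k) H -> (forall x, 0 <= H x <= B) ->
  \int[P]_x (H x * expR (Zs k.+1 x)) <= \int[P]_x H x.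
Proof.
move=> s0 mH Hb.
have HB x : `|H x| <= B by case/andP: (Hb x) => ? ?; rewrite ger0_norm.
have [ml mX] := (lam_predictable _ (ltn0Sn k), X_adapted _ (ltn0Sn k)).
have [[_ [Xi [mui _]]] [_ [[_ [Vi _]] _]]] := (X_mean _ (ltn0Sn k), X_var _ (ltn0Sn k)).
pose E x := gauss_weight s (lam k.+1 x).
pose a x := H x * (E x * lam k.+1 x).
pose b x := H x * (E x * (lam k.+1 x ^+ 2 / 3)).
have [mE ma mb] : [/\ Gmeasurable_fun (F k) (fun x => H x * E x),
    Gmeasurable_fun (F k) a & Gmeasurable_fun (F k) b].
  by split; rewrite /a /b /E /gauss_weight; measurable_fun_tac.
have [HEB aB bB] : [/\ forall x, `|H x * E x| <= B, forall x, `|a x| <= B * (1 + 3 / s)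
    & forall x, 0 <= b x <= B / s].
  by split=> x; case: (gauss_weight_bounds (lam k.+1 x) s0 (Hb x)).
have HEi : integrable (fun x => H x * E x).
  exact: bounded_integrable _ _ (Gmeasurable_fun_F_measurable mE) HEB.
have [aXi ami] := (integrable_bounded_mul (Gmeasurable_fun_F_measurable ma) aB Xi,
  integrable_bounded_mul (Gmeasurable_fun_F_measurable ma) aB mui).
have bB' x : `|b x| <= B / s by case/andP: (bB x) => ? ?; rewrite ger0_norm.
have int_b h : integrable h -> integrable (fun x => b x * h x).
  exact: integrable_bounded_mul (Gmeasurable_fun_F_measurable mb) bB'.
have expZ_le x : H x * expR (Zs k.+1 x) <=
    H x * E x + (a x * X k.+1 x - a x * mu) + b x * (X k.+1 x - mu) ^+ 2.
  rewrite (_ : _ + _ = H x * (E x * (1 + lam k.+1 x * (X k.+1 x - mu)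
    + (lam k.+1 x * (X k.+1 x - mu)) ^+ 2 / 3))); last by rewrite /a /b; ring.
  by apply: ler_wpM2l (expR_Z_le _ _ _ _ _ _); case/andP: (Hb x).
have weight_le x : H x * E x + b x * s <= H x.
  rewrite -[leRHS]mulr1 (_ : _ + _ = H x * (E x * (1 + lam k.+1 x ^+ 2 * s / 3))).
    by rewrite ler_wpM2l ?gauss_weight_mul1D_le1 //; case/andP: (Hb x).
  by rewrite /b; ring.
have bsi := int_b _ (finite_measure_integrable_cst P s measurableT).
apply: le_trans (le_Rintegral measurableT (integrable_mul_expZ mH HB) _
  (fun x _ => expZ_le x)) _.
  exact: integrable_add (integrable_add HEi (integrable_sub aXi ami)) (int_b _ Vi).
rewrite RintegralD ?int_b ?(integrable_add HEi (integrable_sub aXi ami)) //.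
rewrite RintegralD ?(integrable_sub aXi ami) // RintegralB // (Rintegral_mul_X_eq ma aB).
rewrite subrr addr0.
apply: le_trans (_ : _ <= \int[P]_x (H x * E x) + \int[P]_x (b x * s)) _.
  by rewrite lerD2l; exact: Rintegral_mul_sqr_centered_le mb bB.
have Hi : integrable H := bounded_integrable _ _ (Gmeasurable_fun_F_measurable mH) HB.
rewrite -RintegralD //.
exact: le_Rintegral measurableT (integrable_add HEi bsi) Hi (fun x _ => weight_le x).
Qed.

Lemma Rintegral_mul_expZ_le k (H : T -> R) B :
  Gmeasurable_fun (F k) H -> (forall x, 0 <= H x <= B) ->
  \int[P]_x (H x * expR (Zs k.+1 x)) <= \int[P]_x H x.
Proof.
move=> mH Hb; have [s0|s0] := eqVneq s 0.
  by rewrite Rintegral_mul_expZ_var0.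
by apply: Rintegral_mul_expZ_le_pos mH Hb; rewrite lt_neqAle eq_sym s0.
Qed.

Section Ville.
Context {c : R}.
Hypothesis c_gt0 : 0 < c.

Fixpoint below n : set T :=
  if n is n'.+1 then below n' `&` [set w | Ms n'.+1 w <= c] else setT.

(* [M] stopped when it first exceeds [c], with the overshoot truncated to [c] *)
Definition stopped n x := Ms n x * \1_(below n) x + c * \1_(~` below n) x.

Lemma F_below n : F n (below n).
Proof.
elim: n => [|n IH] /=; first exact: G_setT (F_sigma 0).
apply: G_setI (F_sigma _) _ _ (F_mono (leqnSn n) _ IH) _.
rewrite (_ : [set w | _] = Ms n.+1 @^-1` `]-oo, c]); last first.
  by apply/seteqP; split=> w; rewrite /preimage /= in_itv.
exact (Gmeasurable_fun_preimage (F_sigma _) _ (Gmeasurable_fun_M _) (measurable_itv _)).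
Qed.

Lemma measurable_below n : measurable (below n).
Proof. exact: F_sub (F_below n). Qed.

Lemma below_nonincr : {homo below : m n / (m <= n)%N >-> n `<=` m}.
Proof.
move=> m n; elim: n => [|n IH]; first by rewrite leqn0 => /eqP->.
by rewrite leq_eqVlt => /predU1P[->//|/IH mn] w [/mn].
Qed.

Lemma measurable_stopped n : measurable_fun setT (stopped n).
Proof.
have mM := Gmeasurable_fun_F_measurable (Gmeasurable_fun_M n).
have mI := measurable_indic (R := R) (measurable_below n) (D := setT).
have mIC := measurable_indic (R := R) (measurableC (measurable_below n)) (D := setT).
rewrite /stopped; measurable_fun_tac.
Qed.

Lemma normr_stopped_le n x : `|stopped n x| <= expR (n%:R * (3 / 2)) + c.
Proof.
have M0 : 0 <= Ms n x := expR_ge0 _.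
rewrite /stopped ger0_norm ?addr_ge0 ?mulr_ge0 ?indic_ge0 ?(ltW c_gt0) //.
apply: lerD; rewrite -[leRHS]mulr1; apply: ler_pM;
  rewrite ?indic_ge0 ?indic_le1 ?(ltW c_gt0) //.
exact: M_le.
Qed.

Lemma stopped_succ_le n x : stopped n.+1 x <=
  Ms n x * \1_(below n) x * expR (Zs n.+1 x) + c * \1_(~` below n) x.
Proof.
rewrite /stopped MS; have c0 := ltW c_gt0.
have [bn|bn] := pselect (below n x); last first.
  have bn1 : ~ below n.+1 x by case.
  rewrite (indic_eq0 bn1) (indic_eq0 bn).
  by rewrite (indic_eq1 (A := ~` below n.+1) bn1) (indic_eq1 (A := ~` below n) bn); lra.
rewrite (indic_eq1 bn) (indic_eq0 (A := ~` below n) (fun nbn => nbn bn)).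
have [Mc|Mc] := leP (Ms n x * expR (Zs n.+1 x)) c.
  have bn1 : below n.+1 x by split => //=; rewrite MS.
  by rewrite (indic_eq1 bn1) (indic_eq0 (A := ~` below n.+1) (fun nbn => nbn bn1)); lra.
have bn1 : ~ below n.+1 x by case=> _ /=; rewrite MS leNgt Mc.
by rewrite (indic_eq0 bn1) (indic_eq1 (A := ~` below n.+1) bn1); lra.
Qed.

Lemma Rintegral_stopped_le1 n : \int[P]_x stopped n x <= 1.
Proof.
have int_stopped m : integrable (stopped m).
  exact: bounded_integrable _ _ (measurable_stopped m) (normr_stopped_le m).
have int_indic (A : set T) : measurable A -> integrable (\1_A : T -> R).
  by move=> mA; exact: bounded_integrable _ _ (measurable_indic mA) (normr_indic_le1 A).
elim: n => [|n IH].
  rewrite (eq_Rintegral P (g := cst 1)) => [|x _]; last first.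
    by rewrite /stopped M0 (indic_eq1 (A := below 0)) // indic_eq0 /=; [lra | case].
  rewrite Rintegral_cst // mul1r [fine _](_ : _ = 1) //.
  exact: (congr1 fine (probability_setT P)).
pose H x := Ms n x * \1_(below n) x.
have mH : Gmeasurable_fun (F n) H.
  apply: measurable_funM; first exact: Gmeasurable_fun_M.
  exact: Gmeasurable_fun_indic (F_below n).
have Hb x : 0 <= H x <= expR (n%:R * (3 / 2)).
  rewrite /H mulr_ge0 ?expR_ge0 ?indic_ge0 //= -[leRHS]mulr1.
  by rewrite ler_pM ?expR_ge0 ?indic_ge0 ?indic_le1 ?M_le.
have HB x : `|H x| <= expR (n%:R * (3 / 2)).
  by case/andP: (Hb x) => H0 HB; rewrite ger0_norm.
have iH : integrable H := bounded_integrable _ _ (Gmeasurable_fun_F_measurable mH) HB.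
have iC : integrable (fun x => c * \1_(~` below n) x).
  exact/integrable_cst_mul/int_indic/measurableC/measurable_below.
apply: le_trans IH.
apply: le_trans (le_Rintegral measurableT (int_stopped _)
  (integrable_add (integrable_mul_expZ mH HB) iC) (fun x _ => stopped_succ_le n x)) _.
rewrite RintegralD ?(integrable_mul_expZ mH HB) // /stopped RintegralD // lerD2r.
exact: Rintegral_mul_expZ_le mH Hb.
Qed.

Lemma ville : (P [set w | forall t, (0 < t)%N -> (Ms t w <= c)%R] >= (1 - c^-1)%:E)%E.
Proof.
have -> : [set w | forall t, (0 < t)%N -> Ms t w <= c] = \bigcap_n below n.
  apply/seteqP; split=> w.
    by move=> Mc n _; elim: n => [|n IH] //=; split => //; exact: Mc.
  by move=> bw [|t] // _; have [] := bw t.+1 I.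
have below_ge n : ((1 - c^-1)%:E <= P (below n))%E.
  have mC := measurableC (measurable_below n).
  have iC : integrable (\1_(~` below n) : T -> R).
    exact: bounded_integrable _ _ (measurable_indic mC) (normr_indic_le1 _).
  have cPC : c * fine (P (~` below n)) <= 1.
    apply: le_trans (Rintegral_stopped_le1 n).
    have -> : fine (P (~` below n)) = \int[P]_x (\1_(~` below n) x : R).
      by rewrite /Rintegral integral_indic // setIT.
    rewrite -RintegralZl //; apply: (le_Rintegral measurableT (integrable_cst_mul c iC)
      (bounded_integrable _ _ (measurable_stopped n) (normr_stopped_le n))) => x _.
    rewrite /stopped lerDr mulr_ge0 ?indic_ge0 ?expR_ge0 //.
  rewrite -[below n]setCK probability_setC // -(fineK (fin_num_measure P _ mC)).
  by rewrite -EFinB lee_fin lerB // -(ler_pM2l c_gt0) mulfV ?gt_eqF.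
have cv : (P \o below) @ \oo --> P (\bigcap_n below n).
  apply: nonincreasing_cvg_mu => [| | |m n mn].
  - by rewrite -ge0_fin_numE // fin_num_measure //; exact: measurable_below.
  - exact: measurable_below.
  - by apply: bigcapT_measurable => k; exact: measurable_below.
  - by apply/subsetPset; exact: below_nonincr.
rewrite -(cvg_lim _ cv) //; apply: lime_ge; first exact: cvgP cv.
exact: nearW.
Qed.

End Ville.

End TestSupermartingale.

Lemma prob_mu_notin_aCIplus {d : measure_display} {T : measurableType d} {R : realType}
    {P : probability T R} {F : nat -> set (set T)} {X lam : nat -> T -> R}
    {mu sigma alpha : R} :
  filtration F ->
  (forall t, (0 < t)%N -> Gmeasurable_fun (F t) (X t)) ->
  (forall t, (0 < t)%N -> is_cond_exp P (F t.-1) (X t) (fun _ => mu)) ->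
  (forall t, (0 < t)%N -> exists Y : T -> R,
      is_cond_exp P (F t.-1) (fun w => (X t w - mu) ^+ 2) Y /\
      {ae P, forall w, Y w <= sigma ^+ 2}) ->
  0 < alpha < 1 ->
  (forall t, (0 < t)%N -> Gmeasurable_fun (F t.-1) (lam t)) ->
  (P [set w | forall t, (0 < t)%N -> ~ aCIplus lam X alpha sigma t w mu]
     >= (1 - alpha / 2)%:E)%E.
Proof.
move=> hF hX hmu hvar ha hlam; have /andP[a0 _] := ha.
have -> : [set w | forall t, (0 < t)%N -> ~ aCIplus lam X alpha sigma t w mu] =
    [set w | forall t, (0 < t)%N -> (M X lam mu (sigma ^+ 2) t w <= 2 / alpha)%R].
  by apply/seteqP; split=> w Mw t t0; apply/(not_aCIplus_iff _ _ _ _ _ _ _ ha); exact: Mw.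
have c0 : 0 < 2 / alpha by rewrite divr_gt0.
rewrite -[alpha / 2]invf_div.
exact (ville hF (sqr_ge0 sigma) hX hmu hvar hlam c0).
Qed.

Theorem lemma5 (d : measure_display) (T : measurableType d) (R : realType)
  (P : probability T R) (F : nat -> set (set T)) (X lam : nat -> T -> R)
  (mu sigma alpha : R) :
  filtration F ->
  F 0%N = [set set0; setT] ->
  (forall t, (0 < t)%N -> Gmeasurable (F t) (X t)) ->
  (forall t, (0 < t)%N -> is_cond_exp P (F t.-1) (X t) (fun _ => mu)) ->
  (forall t, (0 < t)%N -> exists Y : T -> R,
      is_cond_exp P (F t.-1) (fun w => (X t w - mu) ^+ 2) Y /\
      {ae P, forall w, Y w <= sigma ^+ 2}) ->
  0 < alpha < 1 ->
  (forall t, (0 < t)%N -> Gmeasurable (F t.-1) (lam t)) ->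
  (P [set w | forall t, (0 < t)%N -> ~ aCIplus lam X alpha sigma t w mu]
     >= (1 - alpha / 2)%:E)%E /\
  (P [set w | forall t, (0 < t)%N -> ~ aCIminus lam X alpha sigma t w mu]
     >= (1 - alpha / 2)%:E)%E.
Proof.
move=> hF _ hX hmu hvar ha hlam.
have hX' t t0 := proj1 (GmeasurableP (F_sigma hF t) (X t)) (hX t t0).
have hlam' t t0 := proj1 (GmeasurableP (F_sigma hF t.-1) (lam t)) (hlam t t0).
split; first exact (prob_mu_notin_aCIplus hF hX' hmu hvar ha hlam').
have -> : [set w | forall t, (0 < t)%N -> ~ aCIminus lam X alpha sigma t w mu] =
    [set w | forall t, (0 < t)%N -> ~ aCIplus (fun i w => - lam i w) X alpha sigma t w mu].
  apply/seteqP; split=> w h t t0;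
    by [rewrite -aCIminus_opp; exact: h | rewrite aCIminus_opp; exact: h].
apply: (prob_mu_notin_aCIplus hF hX' hmu hvar ha) => t t0.
exact: measurable_funN (hlam' t t0).
Qed.
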